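(* Let $\Omega\subseteq S^{n-1}$ be a closed set not contained in any closed hemisphere of $S^{n-1}$, let $\Psi\in\mathcal C_I\cup\mathcal C_d$, $f\in C^+(\Omega)$, $g\in C(\Omega)$, and for $|\varepsilon|$ sufficiently small let $f_\varepsilon\in C^+(\Omega)$ be defined by $\Psi(\xi,f_\varepsilon(\xi))=\Psi(\xi,f(\xi))+\varepsilon g(\xi)$, $\xi\in\Omega$. (i) For $v\in S^{n-1}\setminus\eta_{\langle f\rangle}$, letting $u_0=\alpha_{\langle f\rangle^*}(v)$, $$\lim_{\varepsilon\to0}\frac{\log h_{\langle f_\varepsilon\rangle}(v)-\log h_{\langle f\rangle}(v)}{\varepsilon}=\frac{g(u_0)}{f(u_0)\Psi_t(u_0,f(u_0))}.$$ (ii) For $\xi\in S^{n-1}\setminus\eta_{\langle 1/f\rangle}$, letting $u_1=\alpha_{[f]}(\xi)$, $$\lim_{\varepsilon\to0}\frac{\log\rho_{[f_\varepsilon]}(\xi)-\log\rho_{[f]}(\xi)}{\varepsilon}=\frac{g(u_1)}{f(u_1)\Psi_t(u_1,f(u_1))}.$$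
   Context: $S^{n-1}$ is the unit sphere of $\mathbb R^n$, $n\ge2$. $\mathscr K^n_{(o)}$ is the set of compact convex sets in $\mathbb R^n$ with the origin in their interior. For $K\in\mathscr K^n_{(o)}$: $h_K(x)=\max\{x\cdot y:y\in K\}$, $\rho_K(x)=\max\{t\ge0:tx\in K\}$, $K^*=\{x:x\cdot y\le1\ \forall y\in K\}$. $\eta_K$ is the set of $u\in S^{n-1}$ for which $\{x\in\partial K:x\cdot u=h_K(u)\}$ contains two or more points. For $\xi\in S^{n-1}$, $\pmb\alpha_K(\xi)$ is the set of outer unit normals of $K$ at $\rho_K(\xi)\xi$; for $v\notin\eta_K$ the set $\pmb\alpha_{K^*}(v)$ is a singleton, written $\{\alpha_{K^*}(v)\}$ (and, in particular, $\alpha_{\langle f\rangle^*}(v)$ for $v\notin\eta_{\langle f\rangle}$, $\alpha_{[f]}(\xi)$ for $\xi\notin\eta_{\langle1/f\rangle}$, noting $[f]=\langle 1/f\rangle^*$, are well-defined and lie in $\Omega$). $\mathcal C$ is the set of $G:S^{n-1}\times(0,\infty)\to\mathbb R$ with $G$ and $G_t=\partial G/\partial t$ continuous; $\mathcal C_I=\{G\in\mathcal C:G_t>0\}$, $\mathcal C_d=\{G\in\mathcal C:G_t<0\}$. $C(\Omega)$: continuous functions on $\Omega$; $C^+(\Omega)$: strictly positive ones. For $f\in C^+(\Omega)$: $[f]=\bigcap_{\xi\in\Omega}\{x:x\cdot\xi\le f(\xi)\}$ and $\langle f\rangle=\mathrm{conv}\{f(\xi)\xi:\xi\in\Omega\}$.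 *)

From HB Require Import structures.
From mathcomp Require Import all_boot all_order all_algebra.
From mathcomp Require Import all_classical all_reals all_analysis.
Set Implicit Arguments. Unset Strict Implicit. Unset Printing Implicit Defensive.
Import Order.TTheory GRing.Theory Num.Theory.
Import numFieldNormedType.Exports.
Local Open Scope classical_set_scope.
Local Open Scope ring_scope.

Section ConvexDefs.
Variables (R : realType) (n : nat).
Implicit Types (x y u : 'rV[R]_n) (K A : set 'rV[R]_n).

Definition dotv x y : R := \sum_(i < n) x ord0 i * y ord0 i.

Definition sphere : set 'rV[R]_n := [set x | dotv x x = 1].

Definition hemisphere u : set 'rV[R]_n := [set x | sphere x /\ 0 <= dotv x u].

Definition convex_s A : Prop :=
  forall x y (t : R), A x -> A y -> 0 <= t <= 1 -> A (t *: x + (1 - t) *: y).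
Definition conv A : set 'rV[R]_n :=
  [set x | forall C, convex_s C -> A `<=` C -> C x].

Definition supp_fun K x : R := sup [set dotv x y | y in K].
Definition radial_fun K x : R := sup [set t : R | 0 <= t /\ K (t *: x)].

Definition polar K : set 'rV[R]_n := [set x | forall y, K y -> dotv x y <= 1].

Definition bdry K : set 'rV[R]_n := closure K `\` interior K.

Definition eta_set K : set 'rV[R]_n :=
  [set u | sphere u /\ exists x y, x <> y /\
     bdry K x /\ dotv x u = supp_fun K u /\ bdry K y /\ dotv y u = supp_fun K u].

Definition alpha K (xi : 'rV[R]_n) : set 'rV[R]_n :=
  [set u | sphere u /\ dotv (radial_fun K xi *: xi) u = supp_fun K u].

Definition wulff (Omega : set 'rV[R]_n) (f : 'rV[R]_n -> R) : set 'rV[R]_n :=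
  [set x | forall xi, Omega xi -> dotv x xi <= f xi].
Definition chull (Omega : set 'rV[R]_n) (f : 'rV[R]_n -> R) : set 'rV[R]_n :=
  conv [set f xi *: xi | xi in Omega].

Definition Psi_t (Psi : 'rV[R]_n -> R -> R) (xi : 'rV[R]_n) (t : R) : R :=
  derive1 (Psi xi) t.

Definition in_C (Psi : 'rV[R]_n -> R -> R) : Prop :=
  (forall xi t, sphere xi -> 0 < t -> derivable (Psi xi) t 1) /\
  {within [set p : 'rV[R]_n * R | sphere p.1 /\ 0 < p.2],
     continuous (fun p => Psi p.1 p.2)} /\
  {within [set p : 'rV[R]_n * R | sphere p.1 /\ 0 < p.2],
     continuous (fun p => Psi_t Psi p.1 p.2)}.

Definition in_C_I Psi : Prop :=
  in_C Psi /\ forall xi t, sphere xi -> 0 < t -> 0 < Psi_t Psi xi t.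
Definition in_C_d Psi : Prop :=
  in_C Psi /\ forall xi t, sphere xi -> 0 < t -> Psi_t Psi xi t < 0.

Definition in_Cont (Omega : set 'rV[R]_n) (f : 'rV[R]_n -> R) : Prop :=
  {within Omega, continuous f}.
Definition in_Cpos (Omega : set 'rV[R]_n) (f : 'rV[R]_n -> R) : Prop :=
  {within Omega, continuous f} /\ forall xi, Omega xi -> 0 < f xi.

End ConvexDefs.

From Pilot Require Import Defs.
From HB Require Import structures.
From mathcomp Require Import all_boot all_order all_algebra.
From mathcomp Require Import all_classical all_reals all_analysis.
From mathcomp Require Import ring lra.
Import Order.TTheory GRing.Theory Num.Theory.
Import numFieldNormedType.Exports.
Local Open Scope classical_set_scope.
Local Open Scope ring_scope.
Set Implicit Arguments. Unset Strict Implicit. Unset Printing Implicit Defensive.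

(* Write F(xi) = f(xi) (xi . v).  Since Omega is compact and not contained in a
   closed hemisphere, F attains a positive maximum on Omega, and h_<f>(v) is that
   maximum.  When v is not in eta_<f> the maximiser is unique; it is then the only
   constraint of <f>^* active at v / h_<f>(v), so it is the normal u0.
   The mean value theorem, applied to Psi(xi, .) and to ln, turns the implicit
   equation Psi(xi, f_e) = Psi(xi, f) + e g into
   (ln f_e - ln f) / e --> g / (f Psi_t(., f)), uniformly near every point of Omega.
   Near u0 this controls f_e(xi) (xi . v) to first order, and away from u0 the
   perturbation is absorbed by the gap below max F; by compactness,
   ln h_<f_e>(v) = ln h_<f>(v) + e g(u0) / (f(u0) Psi_t(u0, f(u0))) + o(e), which
   is (i).  Part (ii) is (i) for 1/f, because [f] = <1/f>^* and rho_{K^*} = 1/h_K. *)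

Section Dotv.
Variables (R : realType) (n : nat).
Local Notation V := 'rV[R]_n.
Implicit Types (x y z u : V).

Lemma dotvC x y : dotv x y = dotv y x.
Proof. by apply: eq_bigr => i _; rewrite mulrC. Qed.

Lemma dotvDl x y z : dotv (x + y) z = dotv x z + dotv y z.
Proof. by rewrite /dotv -big_split; apply: eq_bigr => i _; rewrite mxE mulrDl. Qed.

Lemma dotvZl (a : R) x z : dotv (a *: x) z = a * dotv x z.
Proof. by rewrite /dotv mulr_sumr; apply: eq_bigr => i _; rewrite mxE mulrA. Qed.

Lemma dotvNl x z : dotv (- x) z = - dotv x z.
Proof. by rewrite -scaleN1r dotvZl mulN1r. Qed.

Lemma dotvBl x y z : dotv (x - y) z = dotv x z - dotv y z.
Proof. by rewrite dotvDl dotvNl. Qed.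

Lemma dotvDr x y z : dotv z (x + y) = dotv z x + dotv z y.
Proof. by rewrite dotvC dotvDl !(dotvC z). Qed.

Lemma dotvZr (a : R) x z : dotv z (a *: x) = a * dotv z x.
Proof. by rewrite dotvC dotvZl dotvC. Qed.

Lemma dotvNr x z : dotv z (- x) = - dotv z x.
Proof. by rewrite dotvC dotvNl dotvC. Qed.

Lemma dotvBr x y z : dotv z (x - y) = dotv z x - dotv z y.
Proof. by rewrite dotvDr dotvNr. Qed.

Lemma dotvv_ge0 x : 0 <= dotv x x.
Proof. by apply: sumr_ge0 => i _; rewrite -expr2 sqr_ge0. Qed.

Lemma dotvv_eq0 x : dotv x x = 0 -> x = 0.
Proof.
move=> /eqP; rewrite psumr_eq0 => [/allP x0|i _]; last by rewrite -expr2 sqr_ge0.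
apply/rowP => i; rewrite mxE.
by apply/eqP; rewrite -sqrf_eq0 expr2; exact: x0 (mem_index_enum i).
Qed.

Lemma dotv_sqr_le x u : dotv u u = 1 -> dotv x u ^+ 2 <= dotv x x.
Proof.
move=> uu; have := dotvv_ge0 (x - dotv x u *: u).
rewrite !dotvBl !dotvBr !dotvZl !dotvZr uu (dotvC u x).
by rewrite mulr1 subrr subr0 subr_ge0 expr2.
Qed.

Lemma dotv0l z : dotv 0 z = 0.
Proof. by rewrite /dotv big1 // => i _; rewrite mxE mul0r. Qed.

Lemma dotv_le_sqrt x u : dotv u u = 1 -> dotv x u <= Num.sqrt (dotv x x).
Proof.
move=> uu; apply: le_trans (ler_norm _) _.
by rewrite -sqrtr_sqr ler_sqrt ?dotvv_ge0 ?dotv_sqr_le.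
Qed.

Lemma continuous_dotv y : continuous (fun x : V => dotv x y).
Proof.
rewrite /dotv; apply: (@continuous_big _ _ +%R 0 xpredT add_continuous) => i _ x.
by apply: cvgMl; [exact: nbhs_filter | exact: (@coord_continuous R 1 n ord0 i x)].
Qed.

Lemma continuous_dotvv : continuous (fun x : V => dotv x x).
Proof.
rewrite /dotv; apply: (@continuous_big _ _ +%R 0 xpredT add_continuous) => i _ x.
by apply: cvgM; [exact: nbhs_filter | exact: (@coord_continuous R 1 n ord0 i x)..].
Qed.

End Dotv.

Section Sphere.
Variables (R : realType) (n : nat).
Local Notation V := 'rV[R]_n.

Lemma sphereN (y : V) : sphere y -> sphere (- y).
Proof. by rewrite /sphere /= dotvNl dotvNr opprK. Qed.

Lemma sphere_closed : closed (@sphere R n).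
Proof. exact: closed_comp (fun x _ => @continuous_dotvv R n x) (@closed_eq R 1). Qed.

Lemma sphere_compact : compact (@sphere R n).
Proof.
apply: bounded_closed_compact; last exact: sphere_closed.
exists 1; split => // M M1 x sx; apply/ltW; apply: le_lt_trans M1.
rewrite /Num.Def.normr /= mx_normrE; apply: bigmax_le => // -[i j] _ /=.
rewrite (ord1 i) -(ler_pXn2r (n := 2)) ?nnegrE // expr1n real_normK ?num_real //.
rewrite -sx /dotv (bigD1 j) //= expr2 lerDl.
by apply: sumr_ge0 => k _; rewrite -expr2 sqr_ge0.
Qed.

End Sphere.

Section SupportFunction.
Variables (R : realType) (n : nat).
Local Notation V := 'rV[R]_n.
Implicit Types (x y z v : V) (A K Om : set V) (h : V -> R).

Lemma sub_conv A : A `<=` Defs.conv A.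
Proof. by move=> x Ax C _; apply. Qed.

Lemma convex_halfspace v (b : R) : convex_s [set x : V | dotv x v <= b].
Proof.
move=> x y t /= xb yb /andP[t0 t1]; rewrite dotvDl !dotvZl.
have -> : b = t * b + (1 - t) * b by ring.
by rewrite lerD ?ler_wpM2l ?subr_ge0.
Qed.

Lemma conv_dotv_le A v (b : R) :
  (forall x, A x -> dotv x v <= b) -> forall x, Defs.conv A x -> dotv x v <= b.
Proof.
by move=> Ab x /(_ [set y | dotv y v <= b]); apply; [exact: convex_halfspace | exact: Ab].
Qed.

Lemma chull_vertex Om h xi : Om xi -> chull Om h (h xi *: xi).
Proof. by move=> Oxi; apply: sub_conv; exists xi. Qed.

Lemma chull_dotv_le Om h v (b : R) :
  (forall xi, Om xi -> h xi * dotv xi v <= b) ->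
  forall y, chull Om h y -> dotv y v <= b.
Proof. by move=> hb; apply: conv_dotv_le => _ [xi Oxi <-]; rewrite dotvZl hb. Qed.

Section Bounded.
Variables (Om : set V) (h : V -> R) (v : V) (b : R) (xi0 : V).
Hypotheses (Oxi0 : Om xi0) (hb : forall xi, Om xi -> h xi * dotv xi v <= b).

Lemma has_sup_chull : has_sup [set dotv v y | y in chull Om h].
Proof.
split; first by exists (dotv v (h xi0 *: xi0)), (h xi0 *: xi0); first exact: chull_vertex.
by exists b => _ [y Ky <-]; rewrite dotvC (chull_dotv_le hb).
Qed.

Lemma supp_fun_chull_le : supp_fun (chull Om h) v <= b.
Proof.
apply: ge_sup; first exact: has_sup_chull.1.
by move=> _ [y Ky <-]; rewrite dotvC (chull_dotv_le hb).
Qed.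

Lemma supp_fun_chull_ge xi : Om xi -> h xi * dotv xi v <= supp_fun (chull Om h) v.
Proof.
move=> Oxi; apply: sup_upper_bound; first exact: has_sup_chull.
by exists (h xi *: xi); [exact: chull_vertex | rewrite dotvC dotvZl].
Qed.

End Bounded.

Lemma supp_fun_chull_max Om h v xi0 : Om xi0 ->
  (forall xi, Om xi -> h xi * dotv xi v <= h xi0 * dotv xi0 v) ->
  supp_fun (chull Om h) v = h xi0 * dotv xi0 v.
Proof.
move=> O0 hb; apply/le_anti.
by rewrite (supp_fun_chull_le O0 hb) (supp_fun_chull_ge O0 hb O0).
Qed.

Lemma polar_chullP Om h z :
  polar (chull Om h) z <-> forall xi, Om xi -> h xi * dotv z xi <= 1.
Proof.
split=> [Pz xi Oxi|Pz y /(chull_dotv_le (v := z)) yz].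
  by rewrite -dotvZr Pz //; exact: chull_vertex.
by rewrite dotvC yz // => xi Oxi; rewrite dotvC Pz.
Qed.

Lemma wulff_polar_chull Om h : (forall xi, Om xi -> 0 < h xi) ->
  wulff Om h = polar (chull Om (fun xi => (h xi)^-1)).
Proof.
move=> hpos; apply/seteqP; split=> z Hz.
  by apply/polar_chullP => xi Oxi; rewrite mulrC ler_pdivrMr ?mul1r ?hpos ?Hz.
move=> xi Oxi; have /polar_chullP/(_ xi Oxi) := Hz.
by rewrite mulrC ler_pdivrMr ?mul1r ?hpos.
Qed.

Lemma radial_fun_polar K v : has_sup [set dotv v y | y in K] ->
  0 < supp_fun K v -> radial_fun (polar K) v = (supp_fun K v)^-1.
Proof.
move=> supK s0; set s := supp_fun K v.
have polarP t : 0 <= t -> polar K (t *: v) <-> t * s <= 1.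
  move=> t0; split=> [Kt|ts y Ky].
    have [->|tn0] := eqVneq t 0; first by rewrite mul0r.
    have tpos : 0 < t by rewrite lt_def tn0.
    rewrite -(mulfV tn0) ler_pM2l //; apply: ge_sup supK.1 _ => _ [y Ky <-].
    by rewrite -(ler_pM2l tpos) mulfV // -dotvZl Kt.
  rewrite dotvZl (le_trans _ ts) // ler_wpM2l //.
  by apply: sup_upper_bound; [exact: supK | exists y].
have le_sV t : 0 <= t /\ polar K (t *: v) -> t <= s^-1.
  by case=> t0 /(polarP _ t0) ts; rewrite -(ler_pM2r s0) mulVf ?gt_eqF.
have in0 : [set t | 0 <= t /\ polar K (t *: v)] 0.
  by split => //; apply/(polarP _ (lexx 0)); rewrite mul0r.
apply/le_anti/andP; split; first by apply: ge_sup; [exists 0 | exact: le_sV].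
apply: sup_upper_bound; first by split; [exists 0 | exists s^-1].
have sV0 : 0 <= s^-1 by rewrite invr_ge0; exact: ltW.
by split=> //; apply/(polarP _ sV0); rewrite mulVf ?gt_eqF.
Qed.

End SupportFunction.

Section WithinContinuous.
Context {T : topologicalType} {K : numFieldType} (A : set T) (f g : T -> K).

Lemma within_continuousM : {within A, continuous f} -> {within A, continuous g} ->
  {within A, continuous (fun x => f x * g x)}.
Proof.
move=> /subspace_continuousP cf /subspace_continuousP cg.
by apply/subspace_continuousP => x Ax; apply: cvgM; [exact: cf | exact: cg].
Qed.

Lemma within_continuousV : {within A, continuous f} -> (forall x, A x -> f x != 0) ->
  {within A, continuous (fun x => (f x)^-1)}.
Proof.
move=> /subspace_continuousP cf f0; apply/subspace_continuousP => x Ax.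
by apply: cvgV; [exact: f0 | exact: cf].
Qed.

End WithinContinuous.

Lemma within_continuous_cvg {X Y : topologicalType} {T : Type} (F : set_system T)
    {FF : Filter F} (S : set X) (phi : X -> Y) (q : T -> X) (x : X) :
  {within S, continuous phi} -> S x -> q @ F --> x -> (\forall p \near F, S (q p)) ->
  phi (q p) @[p --> F] --> phi x.
Proof.
move=> /subspace_continuousP cphi Sx qx Sq; apply: cvg_comp (cphi x Sx).
by move=> P SP; apply: filterS2 Sq (qx _ SP) => p Sp; apply.
Qed.

Lemma near_lt_cvg {R : realFieldType} {T : Type} {F : set_system T} {FF : Filter F}
    (u w : T -> R) (a b : R) :
  u @ F --> a -> w @ F --> b -> a < b -> \forall p \near F, u p < w p.
Proof.
move=> ua wb ab; have ba : 0 < b - a by rewrite subr_gt0.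
have : \forall p \near F, 0 < w p - u p by apply: cvgr_gt ba; exact: cvgB.
by apply: filterS => p; rewrite subr_gt0.
Qed.

Section ProdWithin.
Context {T : topologicalType} {I : Type} (A : set T) (x : T) (F : set_system I).
Context {FF : Filter F}.

Lemma near_within_fst : \forall p \near filter_prod (within A (nbhs x)) F, A p.1.
Proof. by apply: cvg_fst; exact: withinT. Qed.

Lemma cvg_within_fst {U : topologicalType} (f : T -> U) :
  {within A, continuous f} -> A x ->
  f p.1 @[p --> filter_prod (within A (nbhs x)) F] --> f x.
Proof. by move=> /subspace_continuousP fc Ax; apply: cvg_comp (fc x Ax); exact: cvg_fst. Qed.

Lemma near_prod_within (P : T -> I -> Prop) :
  (\forall p \near filter_prod (within A (nbhs x)) F, P p.1 p.2) ->
  \forall y \near x & i \near F, A y -> P y i.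
Proof.
case=> -[B C] /= [AB FC] BC.
exists ([set y | A y -> B y], C); first by split.
by move=> [y i] [/= By Ci] Ay; apply: (BC (y, i)); split=> //; exact: By.
Qed.

Lemma near_prod_within_at (P : T * I -> Prop) : A x ->
  (\forall p \near filter_prod (within A (nbhs x)) F, P p) -> \forall i \near F, P (x, i).
Proof.
move=> Ax [[B C] [/= AB FC] BC]; apply: filterS FC => i Ci.
by apply: (BC (x, i)); split=> //=; exact: (nbhs_singleton AB).
Qed.

End ProdWithin.

Lemma compact_near_prod_within {T : topologicalType} {I : Type} (K : set T)
    (F : set_system I) (P : I -> T -> Prop) : Filter F -> compact K ->
  (forall x, K x -> \forall p \near filter_prod (within K (nbhs x)) F, P p.2 p.1) ->
  \forall i \near F, K `<=` P i.
Proof.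
move=> FF /compact_near_coveringP/near_covering_withinP cov loc.
by apply: cov => x Kx; exact: near_prod_within (loc x Kx).
Qed.

Section NotHemisphere.
Variables (R : realType) (n : nat) (Om : set 'rV[R]_n).
Hypotheses (Os : Om `<=` @sphere R n) (NH : ~ (exists u, sphere u /\ Om `<=` hemisphere u)).

Lemma not_hemisphere_dotv_gt0 y : sphere y -> exists2 xi, Om xi & 0 < dotv y xi.
Proof.
move=> sy; apply: contrapT => nxi; apply: NH; exists (- y); split; first exact: sphereN.
move=> xi Oxi; split; first exact: Os.
by rewrite dotvNr dotvC oppr_ge0 leNgt; apply/negP => yxi; apply: nxi; exists xi.
Qed.

Lemma not_hemisphere_unif :
  exists2 c : R, 0 < c & forall y, sphere y -> exists2 xi, Om xi & c < dotv y xi.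
Proof.
have cov : \forall c \near (0 : R)^'+,
    @sphere R n `<=` [set y | exists2 xi, Om xi & c < dotv y xi].
  apply: compact_near_prod_within (@sphere_compact R n) _ => y sy.
  have [xi Oxi yxi] := not_hemisphere_dotv_gt0 sy.
  have half : dotv y xi / 2 < dotv y xi by rewrite ltr_pdivrMr // ltr_pMr // ltr1n.
  have near_xi : \forall p \near filter_prod (within (@sphere R n) (nbhs y)) (0 : R)^'+,
      dotv y xi / 2 < dotv p.1 xi.
    apply: cvgr_gt half.
    exact: cvg_within_fst (continuous_subspaceT (@continuous_dotv R n xi)) sy.
  near=> p; exists xi => //; apply: (@lt_trans _ _ (dotv y xi / 2)).
    by near: p; exact: (cvg_snd (nbhs_right_lt (divr_gt0 yxi (ltr0Sn _ 1)))).
  by near: p; exact: near_xi.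
near (0 : R)^'+ => c.
exists c; first by near: c; exact: nbhs_right_gt.
by near: c.
Unshelve. all: by end_near. Qed.

Lemma has_sup_polar_chull (h : 'rV[R]_n -> R) u :
  compact Om -> {within Om, continuous h} -> (forall x, Om x -> 0 < h x) ->
  sphere u -> has_sup [set dotv u z | z in polar (chull Om h)].
Proof.
move=> cpt ch hpos su.
have [xi1 Oxi1 _] := not_hemisphere_dotv_gt0 su.
have [xm /set_mem Oxm hmin] := compact_EVT_min (ex_intro _ xi1 Oxi1) cpt ch.
have [c c0 Hc] := not_hemisphere_unif.
have cm0 : 0 < c * h xm by rewrite mulr_gt0 ?hpos.
split.
  exists 0, 0; last by rewrite dotvC dotv0l.
  by apply/polar_chullP => xi _; rewrite dotv0l mulr0.
exists (c * h xm)^-1 => _ [z /polar_chullP Pz <-]; rewrite dotvC.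
have [->|zn0] := eqVneq z 0; first by rewrite dotv0l invr_ge0 ltW.
apply: le_trans (dotv_le_sqrt _ su) _; set N := Num.sqrt (dotv z z).
have N0 : 0 < N.
  by rewrite sqrtr_gt0 lt_def dotvv_ge0 andbT; apply: contra_neq zn0 => /dotvv_eq0.
have sz : sphere (N^-1 *: z).
  by rewrite /sphere /= dotvZl dotvZr -[dotv z z]sqr_sqrtr ?dotvv_ge0 // -/N; field; rewrite gt_eqF.
have [xi Oxi] := Hc _ sz; rewrite dotvZl ltr_pdivlMl // => Nxi.
rewrite -(ler_pM2r cm0) mulVf ?gt_eqF // (le_trans _ (Pz _ Oxi)) //.
rewrite mulrA [_ * dotv z xi]mulrC ler_pM ?(ltW Nxi) //.
- by rewrite mulr_ge0 // ltW.
- exact: ltW (hpos _ Oxm).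
- by apply: hmin; exact: mem_set.
Qed.

End NotHemisphere.

Section OuterNormal.
Variables (R : realType) (n : nat).
Local Notation V := 'rV[R]_n.

Lemma bdry_supporting (K : set V) v y (b : R) : dotv v v = 1 -> K y -> dotv y v = b ->
  (forall z, K z -> dotv z v <= b) -> bdry K y.
Proof.
move=> vv Ky yv Kb; split; first exact: subset_closure.
move=> /nbhs_ballP [d d0 Hd].
pose t := d / (2 * (`|v| + 1)).
have t0 : 0 < t by rewrite divr_gt0 // mulr_gt0 // ltr_wpDl.
have /Kb : K (y + t *: v).
  apply: Hd; rewrite -ball_normE /ball_ /= opprD addrA subrr sub0r normrN normrZ.
  rewrite gtr0_norm // /t mulrAC ltr_pdivrMr ?mulr_gt0 ?ltr_wpDl // ltr_pM2l //.
  by have := normr_ge0 v; lra.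
by rewrite dotvDl dotvZl yv vv; lra.
Qed.

Lemma sphere_scale_inj (x y : V) (a b : R) : sphere x -> sphere y -> 0 < a -> 0 < b ->
  a *: x = b *: y -> x = y.
Proof.
move=> sx sy a0 b0 E.
have /eqP : dotv (a *: x) (a *: x) = dotv (b *: y) (b *: y) by rewrite E.
rewrite !dotvZl !dotvZr sx sy !mulr1 -!expr2 eqrXn2 ?ltW // => /eqP ab.
by apply: (@scalerI _ _ a); [rewrite gt_eqF | rewrite E ab].
Qed.

Lemma sphere_eq_of_dotv_lt0 (u x : V) : sphere u -> sphere x ->
  (forall w, dotv w x < 0 -> dotv w u <= 0) -> u = x.
Proof.
move=> su sx Hw; set c := dotv u x.
have c0 : 0 <= c.
  by have := Hw (- x); rewrite !dotvNl sx oppr_lt0 ltr01 oppr_le0 dotvC => /(_ isT).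
have c1 : c ^+ 2 <= 1 by rewrite -su dotv_sqr_le.
have c_ge1 : 1 <= c.
  rewrite leNgt; apply/negP => c_lt1.
  have := Hw (u - (c + (1 - c) / 2) *: x).
  by rewrite !dotvBl !dotvZl sx su (dotvC x u) -/c; nra.
apply/eqP; rewrite -subr_eq0; apply/eqP/dotvv_eq0.
by rewrite !dotvBl !dotvBr su sx (dotvC x u) -/c; nra.
Qed.

Section ChullMax.
Variables (Om : set V) (h : V -> R) (v x0 : V).
Hypotheses (Os : Om `<=` @sphere R n) (hpos : forall x, Om x -> 0 < h x).
Hypotheses (Ox0 : Om x0) (Fmax : forall y, Om y -> h y * dotv y v <= h x0 * dotv x0 v).

Lemma chull_argmax_uniq : sphere v -> ~ eta_set (chull Om h) v ->
  forall xi, Om xi -> xi <> x0 -> h xi * dotv xi v < h x0 * dotv x0 v.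
Proof.
move=> sv Neta xi Oxi xix0; rewrite lt_def Fmax // andbT; apply/eqP => Fxi; apply: Neta.
have hK := supp_fun_chull_max Ox0 Fmax.
have support y : Om y -> h y * dotv y v = h x0 * dotv x0 v ->
    bdry (chull Om h) (h y *: y) /\ dotv (h y *: y) v = supp_fun (chull Om h) v.
  move=> Oy Fy; have yv : dotv (h y *: y) v = h x0 * dotv x0 v by rewrite dotvZl.
  split; last by rewrite yv hK.
  exact: bdry_supporting sv (chull_vertex Oy) yv (chull_dotv_le Fmax).
have [b0 s0] := support _ Ox0 erefl; have [b1 s1] := support _ Oxi (esym Fxi).
split=> //; exists (h x0 *: x0), (h xi *: xi); split=> //.
by move/(sphere_scale_inj (Os Ox0) (Os Oxi) (hpos Ox0) (hpos Oxi)) => /esym.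
Qed.

Lemma polar_chull_perturb w : compact Om -> {within Om, continuous h} ->
  0 < h x0 * dotv x0 v -> (forall xi, Om xi -> xi <> x0 -> h xi * dotv xi v < h x0 * dotv x0 v) ->
  dotv w x0 < 0 ->
  \forall s \near (0 : R)^'+, polar (chull Om h) ((h x0 * dotv x0 v)^-1 *: v + s *: w).
Proof.
move=> cpt ch h0pos uniq wx0; set h0 := h x0 * dotv x0 v.
set F := fun y => h y * dotv y v; set G := fun y => h y * dotv y w.
have cF : {within Om, continuous F}.
  exact: within_continuousM ch (continuous_subspaceT (@continuous_dotv R n v)).
have cG : {within Om, continuous G}.
  exact: within_continuousM ch (continuous_subspaceT (@continuous_dotv R n w)).
suff cov : \forall s \near (0 : R)^'+, Om `<=` [set y | F y / h0 + s * G y <= 1].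
  apply: filterS cov => s Fs; apply/polar_chullP => y Oy.
  have -> : h y * dotv (h0^-1 *: v + s *: w) y = F y / h0 + s * G y.
    by rewrite /F /G dotvDl !dotvZl (dotvC v) (dotvC w); ring.
  exact: Fs.
apply: compact_near_prod_within cpt _ => x Ox.
have snd0 : snd @ filter_prod (within Om (nbhs x)) (0 : R)^'+ --> (0 : R).
  exact: cvg_trans cvg_snd (cvg_within _).
have [->|xx0] := eqVneq x x0.
  have G0 : G x0 < 0 by rewrite /G pmulr_rlt0 ?hpos // dotvC.
  have Gneg : \forall p \near filter_prod (within Om (nbhs x0)) (0 : R)^'+, G p.1 < 0.
    by apply: cvgr_lt G0; exact: cvg_within_fst.
  near=> p; rewrite -[1]addr0; apply: lerD.
    by rewrite ler_pdivrMr // mul1r Fmax //; near: p; exact: near_within_fst.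
  rewrite pmulr_rle0; last by near: p; exact: (cvg_snd (nbhs_right_gt _)).
  by apply: ltW; near: p; exact: Gneg.
have Fx : F x / h0 + 0 * G x < 1.
  by rewrite mul0r addr0 ltr_pdivrMr // mul1r; apply: uniq => //; exact/eqP.
have lim : (fun p => F p.1 / h0 + p.2 * G p.1) @ filter_prod (within Om (nbhs x)) (0 : R)^'+
    --> F x / h0 + 0 * G x.
  apply: cvgD; first by apply: cvgMl; exact: cvg_within_fst.
  by apply: cvgM; [exact: snd0 | exact: cvg_within_fst].
have : \forall p \near filter_prod (within Om (nbhs x)) (0 : R)^'+,
    F p.1 / h0 + p.2 * G p.1 < 1 by exact: cvgr_lt Fx.
by apply: filterS => p /ltW.
Unshelve. all: by end_near. Qed.

End ChullMax.

Lemma chull_argmax (Om : set V) (h : V -> R) v :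
  compact Om -> Om `<=` @sphere R n -> ~ (exists u, sphere u /\ Om `<=` hemisphere u) ->
  {within Om, continuous h} -> (forall x, Om x -> 0 < h x) -> sphere v ->
  exists2 x0, Om x0 & 0 < h x0 * dotv x0 v /\
    forall y, Om y -> h y * dotv y v <= h x0 * dotv x0 v.
Proof.
move=> cpt Os NH ch hpos sv.
have cF : {within Om, continuous (fun y => h y * dotv y v)}.
  exact: within_continuousM ch (continuous_subspaceT (@continuous_dotv R n v)).
have [xa Oxa va] := not_hemisphere_dotv_gt0 Os NH sv.
have [x0 /set_mem O0 Fmax] := compact_EVT_max (ex_intro _ xa Oxa) cpt cF.
have {}Fmax y : Om y -> h y * dotv y v <= h x0 * dotv x0 v by move=> Oy; exact: Fmax (mem_set Oy).
exists x0 => //; split=> //.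
by apply: lt_le_trans (Fmax _ Oxa); rewrite mulr_gt0 ?hpos // dotvC.
Qed.

(* u0 is an outer normal of the polar body at v / h0, where the only active
   constraint is the one of the unique maximiser x0; hence u0 = x0. *)
Lemma polar_chull_normal (Om : set V) (h : V -> R) v u0 :
  compact Om -> Om `<=` @sphere R n -> ~ (exists u, sphere u /\ Om `<=` hemisphere u) ->
  {within Om, continuous h} -> (forall x, Om x -> 0 < h x) ->
  sphere v -> ~ eta_set (chull Om h) v -> alpha (polar (chull Om h)) v u0 ->
  [/\ Om u0, 0 < h u0 * dotv u0 v &
    forall xi, Om xi -> xi <> u0 -> h xi * dotv xi v < h u0 * dotv u0 v].
Proof.
move=> cpt Os NH ch hpos sv Neta [su0 Hal].
have [x0 O0 [h0pos Fmax]] := chull_argmax cpt Os NH ch hpos sv.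
set F := fun y => h y * dotv y v.
have uniq := chull_argmax_uniq Os hpos O0 Fmax sv Neta.
have hK : supp_fun (chull Om h) v = F x0 := supp_fun_chull_max O0 Fmax.
have rho : radial_fun (polar (chull Om h)) v = (F x0)^-1.
  by rewrite -hK; apply: radial_fun_polar; [exact: has_sup_chull O0 Fmax | rewrite hK].
rewrite rho in Hal.
suff normal w : dotv w x0 < 0 -> dotv w u0 <= 0.
  by rewrite (sphere_eq_of_dotv_lt0 su0 (Os _ O0) normal); split.
move=> wx0; near (0 : R)^'+ => s.
have : dotv ((F x0)^-1 *: v + s *: w) u0 <= dotv ((F x0)^-1 *: v) u0.
  rewrite Hal dotvC; apply: sup_upper_bound; first exact: has_sup_polar_chull.
  by exists ((F x0)^-1 *: v + s *: w) => //; near: s; exact: polar_chull_perturb.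
rewrite dotvDl gerDl dotvZl pmulr_rle0 //; near: s; exact: nbhs_right_gt.
Unshelve. all: by end_near. Qed.

Lemma supp_fun_chull_gt0 (Om : set V) (h : V -> R) v :
  compact Om -> Om `<=` @sphere R n -> ~ (exists u, sphere u /\ Om `<=` hemisphere u) ->
  {within Om, continuous h} -> (forall x, Om x -> 0 < h x) -> sphere v ->
  0 < supp_fun (chull Om h) v.
Proof.
move=> cpt Os NH ch hpos sv; have [x0 O0 [F0 Fmax]] := chull_argmax cpt Os NH ch hpos sv.
by rewrite (supp_fun_chull_max O0 Fmax).
Qed.

Lemma in_CposV (Om : set V) (h : V -> R) :
  in_Cpos Om h -> in_Cpos Om (fun x => (h x)^-1).
Proof.
case=> ch hpos; split=> [|x Ox]; last by rewrite invr_gt0 hpos.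
by apply: within_continuousV => // x Ox; rewrite gt_eqF ?hpos.
Qed.

Lemma radial_fun_wulff (Om : set V) (h : V -> R) v :
  compact Om -> Om `<=` @sphere R n -> ~ (exists u, sphere u /\ Om `<=` hemisphere u) ->
  in_Cpos Om h -> sphere v ->
  radial_fun (wulff Om h) v = (supp_fun (chull Om (fun x => (h x)^-1)) v)^-1.
Proof.
move=> cpt Os NH hC sv; rewrite wulff_polar_chull; last by case: hC.
have [chV hVpos] := in_CposV hC.
have [x0 O0 [_ Fmax]] := chull_argmax cpt Os NH chV hVpos sv.
apply: radial_fun_polar; first exact: has_sup_chull O0 Fmax.
exact: supp_fun_chull_gt0.
Qed.

End OuterNormal.

Section Dslope.
Variable R : realType.
Implicit Types (phi : R -> R) (a b c t : R).

(* The difference quotient, completed by the derivative on the diagonal so that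
   [dslopeP] holds without side condition. *)
Definition dslope phi a b : R :=
  if a == b then derive1 phi a else (phi b - phi a) / (b - a).

Lemma dslopeC phi a b : dslope phi a b = dslope phi b a.
Proof.
rewrite /dslope eq_sym; case: eqP => [->//|_].
by rewrite -[phi b - phi a]opprB -[b - a]opprB invrN mulrNN.
Qed.

Lemma dslopeP phi a b : phi b - phi a = dslope phi a b * (b - a).
Proof.
rewrite /dslope; case: eqP => [->|/eqP ab]; first by rewrite !subrr mulr0.
by rewrite divfK // subr_eq0 eq_sym.
Qed.

Lemma dslope_mvt phi a b : (forall t, 0 < t -> derivable phi t 1) -> 0 < a -> 0 < b ->
  exists2 c, Num.min a b <= c <= Num.max a b & dslope phi a b = derive1 phi c.
Proof.
move=> dphi; wlog ab : a b / a <= b => [hwlog a0 b0|a0 b0].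
  have /orP[ab|ba] := le_total a b; first exact: hwlog.
  by rewrite minC maxC dslopeC; exact: hwlog.
rewrite (min_idPl ab) (max_idPr ab) /dslope.
case: eqP => [<-|/eqP anb]; first by exists a; rewrite ?lexx.
have {}ab : a < b by rewrite lt_neqAle anb ab.
have := @MVT R phi (fun c => derive1 phi c) a b ab; case.
- move=> c; rewrite in_itv /= => /andP[ac _]; rewrite derive1E.
  by apply: derivableP; exact: dphi (lt_trans a0 ac).
- apply: derivable_within_continuous => c; rewrite in_itv /= => /andP[ac _].
  exact: dphi (lt_le_trans a0 ac).
- move=> c; rewrite in_itv /= => /andP[ac cb] E; exists c; first by rewrite !ltW.
  by rewrite E mulfK // subr_eq0 eq_sym.
Qed.

Lemma ball_between t (r : R) a b c : Num.min a b <= c <= Num.max a b ->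
  ball t r a -> ball t r b -> ball t r c.
Proof.
rewrite /ball /= !ltr_distlC => /andP[ac cb] /andP[a1 a2] /andP[b1 b2].
by rewrite (lt_le_trans _ ac) ?lt_min ?a1 ?b1 // (le_lt_trans cb) // gt_max a2 b2.
Qed.

Lemma cvg_dslope {X : topologicalType} {T : Type} (F : set_system T) {FF : Filter F}
    (D : set X) (Phi : X -> R -> R) (y : T -> X) (a b : T -> R) (x : X) t :
  (forall z s, D z -> 0 < s -> derivable (Phi z) s 1) -> 0 < t ->
  (fun q => derive1 (Phi q.1) q.2) @ within [set q | D q.1 /\ 0 < q.2] (nbhs (x, t))
    --> derive1 (Phi x) t ->
  (\forall p \near F, D (y p)) -> y @ F --> x -> a @ F --> t -> b @ F --> t ->
  dslope (Phi (y p)) (a p) (b p) @[p --> F] --> derive1 (Phi x) t.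
Proof.
move=> dPhi t0 cPhi' Dy yx acvg bcvg; apply/cvgrPdist_lt => eps eps0.
have [[U W] [/= Ux Wt] UW] := (cvgrPdist_lt _ _).1 cPhi' _ eps0.
have [r r0 rW] := (nbhs_ballP _ _).1 Wt.
near=> p.
have Dyp : D (y p) by near: p.
have a0 : 0 < a p by near: p; apply: cvgr_gt t0.
have b0 : 0 < b p by near: p; apply: cvgr_gt t0.
have [c cab ->] := dslope_mvt (fun s => dPhi _ s Dyp) a0 b0.
apply: (UW (y p, c)); first split => /=.
- by near: p; exact: yx.
- apply: rW; apply: (ball_between cab).
  + by near: p; apply: acvg; exact: nbhsx_ballx.
  + by near: p; apply: bcvg; exact: nbhsx_ballx.
- by split=> //=; apply: lt_le_trans (andP cab).1; rewrite lt_min a0 b0.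
Unshelve. all: by end_near. Qed.

Lemma derive1_ln t : 0 < t -> derive1 (@ln R) t = t^-1.
Proof. by move=> t0; rewrite derive1E; have [_ ->] := is_derive1_ln t0. Qed.

Lemma cvg_dslope_ln {T : Type} (F : set_system T) {FF : Filter F} (a b : T -> R) t :
  0 < t -> a @ F --> t -> b @ F --> t -> dslope (@ln R) (a p) (b p) @[p --> F] --> t^-1.
Proof.
move=> t0 acvg bcvg; rewrite -derive1_ln //.
apply: (@cvg_dslope R _ F _ setT (fun _ => @ln R) (fun _ => t)) => //.
- by move=> z s _ s0; apply: ex_derive; exact: is_derive1_ln.
- have inv : (fun q : R * R => q.2^-1) @ within [set q | setT q.1 /\ 0 < q.2] (nbhs (t, t))
      --> t^-1.
    by apply: cvg_within_filter; apply: cvgV; [rewrite gt_eqF | exact: cvg_snd].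
  rewrite derive1_ln //; apply: cvg_trans inv; apply: near_eq_cvg.
  by apply: filterS (withinT _ _) => q [_ q0]; rewrite derive1_ln.
- exact: nearW.
- exact: cvg_cst.
Qed.

End Dslope.

Definition lndq {R : realType} {T : Type} (he : R -> T -> R) (h : T -> R) (e : R) (y : T) : R :=
  (ln (he e y) - ln (h y)) / e.

Lemma lndqV {R : realType} {T : Type} (he : R -> T -> R) (h : T -> R) e y :
  0 < he e y -> 0 < h y ->
  lndq (fun e y => (he e y)^-1) (fun y => (h y)^-1) e y = - lndq he h e y.
Proof. by move=> he0 h0; rewrite /lndq !lnV ?posrE //; ring. Qed.

Lemma in_C_sign {R : realType} {n : nat} (Psi : 'rV[R]_n -> R -> R) :
  in_C_I Psi \/ in_C_d Psi ->
  exists s : R, forall y t, sphere y -> 0 < t -> 0 < s * Psi_t Psi y t.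
Proof.
case=> -[_ HPsi]; [exists 1 | exists (-1)] => y t sy t0;
  by rewrite ?mul1r ?mulN1r ?oppr_gt0; exact: HPsi.
Qed.

Section ImplicitPerturbation.
Variables (R : realType) (n : nat).
Local Notation V := 'rV[R]_n.
Variables (Om : set V) (Psi : V -> R -> R) (f g : V -> R) (fe : R -> V -> R) (s : R).
Hypotheses (Os : Om `<=` @sphere R n) (HPsi : in_C Psi)
  (Psi_t_sign : forall y t, sphere y -> 0 < t -> 0 < s * Psi_t Psi y t)
  (cf : {within Om, continuous f}) (fpos : forall y, Om y -> 0 < f y)
  (cg : {within Om, continuous g})
  (fe_eq : \forall e \near (0 : R)^', forall y, Om y ->
     0 < fe e y /\ Psi y (fe e y) = Psi y (f y) + e * g y).

Lemma sPsi_lt y a b : sphere y -> 0 < a -> a < b -> s * Psi y a < s * Psi y b.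
Proof.
move=> sy a0 ab; have [dPsi _] := HPsi.
have [c cab Pc] := dslope_mvt (dPsi y ^~ sy) a0 (lt_trans a0 ab).
rewrite -subr_gt0 -mulrBr dslopeP Pc mulrA mulr_gt0 ?subr_gt0 //.
by apply: Psi_t_sign => //; apply: lt_le_trans (andP cab).1; rewrite lt_min a0 (lt_trans a0 ab).
Qed.

Lemma sPsi_ltE y a b : sphere y -> 0 < a -> 0 < b -> (s * Psi y a < s * Psi y b) = (a < b).
Proof.
move=> sy a0 b0; apply/idP/idP; last exact: sPsi_lt.
apply: contraTT; rewrite -!leNgt le_eqVlt => /orP[/eqP->//|ba].
exact/ltW/sPsi_lt.
Qed.

Variable x : V.
Hypothesis Ox : Om x.
Local Notation G := (filter_prod (within Om (nbhs x)) (0 : R)^').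

Let fst_cvg : fst @ G --> x.
Proof. exact: cvg_trans cvg_fst (cvg_within _). Qed.

Let snd_cvg : snd @ G --> (0 : R).
Proof. exact: cvg_trans cvg_snd (cvg_within _). Qed.

Let f_cvg : f p.1 @[p --> G] --> f x.
Proof. exact: cvg_within_fst. Qed.

Let near_sphere : \forall p \near G, sphere p.1.
Proof. by apply: filterS (@near_within_fst _ _ Om x _ _) => p; exact: Os. Qed.

Let near_fe : \forall p \near G,
  0 < fe p.2 p.1 /\ Psi p.1 (fe p.2 p.1) = Psi p.1 (f p.1) + p.2 * g p.1.
Proof. by apply: filterS2 (@near_within_fst _ _ Om x _ _) (cvg_snd fe_eq) => p Op; apply. Qed.

Let cvg_Psi (c : V * R -> R) (t : R) : 0 < t -> c @ G --> t ->
  Psi p.1 (c p) @[p --> G] --> Psi x t.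
Proof.
move=> t0 ct; have [_ [cPsi _]] := HPsi.
apply: (within_continuous_cvg (q := fun p => (p.1, c p)) (x := (x, t)) cPsi) => //.
- by split=> //; exact: Os.
- exact: (@cvg_pair _ _ _ _ _ _ _ _ _ _ _ fst_cvg ct).
- have c0 : \forall p \near G, 0 < c p by apply: cvgr_gt t0.
  by apply: filterS2 near_sphere c0 => p sp cp.
Qed.

Let Psi_fe_cvg : Psi p.1 (fe p.2 p.1) @[p --> G] --> Psi x (f x).
Proof.
have -> : Psi x (f x) = Psi x (f x) + 0 * g x by rewrite mul0r addr0.
apply: cvg_trans (_ : (fun p => Psi p.1 (f p.1) + p.2 * g p.1) @ G --> _).
  by apply: near_eq_cvg; apply: filterS near_fe => p [_ ->].
apply: cvgD; first exact: cvg_Psi (fpos Ox) f_cvg.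
by apply: cvgM; [exact: snd_cvg | exact: cvg_within_fst].
Qed.

Lemma cvg_fe : fe p.2 p.1 @[p --> G] --> f x.
Proof.
set t := f x; have t0 : 0 < t := fpos Ox.
have sPsi_cvg c : 0 < c -> s * Psi p.1 c @[p --> G] --> s * Psi x c.
  by move=> c0; apply: cvgMr; exact: cvg_Psi c0 (cvg_cst c).
have sPsi_fe : s * Psi p.1 (fe p.2 p.1) @[p --> G] --> s * Psi x t.
  by apply: cvgMr; exact: Psi_fe_cvg.
apply/cvgrPdist_lt => eps eps0; set r := Num.min eps t / 2.
have r0 : 0 < r by rewrite divr_gt0 // lt_min eps0 t0.
have [r_eps r_t] : r < eps /\ r < t.
  have rm : r < Num.min eps t by rewrite /r ltr_pdivrMr // ltr_pMr ?lt_min ?eps0 // ltr1n.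
  by split; apply: lt_le_trans rm _; rewrite ge_min lexx ?orbT.
have tr0 : 0 < t - r by rewrite subr_gt0.
have tr1 : 0 < t + r by rewrite addr_gt0.
have up : \forall p \near G, s * Psi p.1 (fe p.2 p.1) < s * Psi p.1 (t + r).
  by apply: near_lt_cvg sPsi_fe (sPsi_cvg _ tr1) _; rewrite (sPsi_ltE (Os Ox) t0 tr1); lra.
have down : \forall p \near G, s * Psi p.1 (t - r) < s * Psi p.1 (fe p.2 p.1).
  by apply: near_lt_cvg (sPsi_cvg _ tr0) sPsi_fe _; rewrite (sPsi_ltE (Os Ox) tr0 t0); lra.
have fe_pos : \forall p \near G, 0 < fe p.2 p.1 by apply: filterS near_fe => p [].
near=> p.
have fe0 : 0 < fe p.2 p.1 by near: p; exact: fe_pos.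
have sp : sphere p.1 by near: p; exact: near_sphere.
have fe_up : fe p.2 p.1 < t + r.
  by rewrite -(sPsi_ltE sp fe0 tr1); near: p; exact: up.
have fe_down : t - r < fe p.2 p.1.
  by rewrite -(sPsi_ltE sp tr0 fe0); near: p; exact: down.
by rewrite ltr_distlC; apply/andP; split; lra.
Unshelve. all: by end_near. Qed.

Let Psi_t_neq0 : Psi_t Psi x (f x) != 0.
Proof.
by have := Psi_t_sign (Os Ox) (fpos Ox); apply: contraTneq => ->; rewrite mulr0 ltxx.
Qed.

Let dslope_Psi_cvg :
  dslope (Psi p.1) (f p.1) (fe p.2 p.1) @[p --> G] --> Psi_t Psi x (f x).
Proof.
have [dPsi [_ cPsit]] := HPsi; have f0 := fpos Ox.
apply: (@cvg_dslope R _ _ G _ (@sphere R n) Psi fst (fun p => f p.1) (fun p => fe p.2 p.1)).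
- exact: dPsi.
- exact: f0.
- by apply: (subspace_continuousP _ _).1 cPsit (x, f x) (conj (Os Ox) f0).
- exact: near_sphere.
- exact: fst_cvg.
- exact: f_cvg.
- exact: cvg_fe.
Qed.

Let lndq_dslope : \forall p \near G,
  dslope (@ln R) (f p.1) (fe p.2 p.1) * g p.1 / dslope (Psi p.1) (f p.1) (fe p.2 p.1)
  = lndq fe f p.2 p.1.
Proof.
have slope0 : \forall p \near G, dslope (Psi p.1) (f p.1) (fe p.2 p.1) != 0.
  have nP0 : 0 < `|Psi_t Psi x (f x)| by rewrite normr_gt0.
  move/cvgrPdist_lt/(_ _ nP0): dslope_Psi_cvg; apply: filterS => p.
  by apply: contraTneq => ->; rewrite subr0 ltxx.
near=> p.
have [_ Efe] : 0 < fe p.2 p.1 /\ Psi p.1 (fe p.2 p.1) = Psi p.1 (f p.1) + p.2 * g p.1.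
  by near: p; exact: near_fe.
have e0 : p.2 != 0 by near: p; exact: (cvg_snd (nbhs_dnbhs_neq 0)).
have P0 : dslope (Psi p.1) (f p.1) (fe p.2 p.1) != 0 by near: p.
have ba : fe p.2 p.1 - f p.1 = p.2 * g p.1 / dslope (Psi p.1) (f p.1) (fe p.2 p.1).
  rewrite -[p.2 * g p.1](addKr (Psi p.1 (f p.1))) -Efe [- _ + _]addrC (dslopeP (Psi p.1)).
  by rewrite mulrC mulKf.
by rewrite /lndq (dslopeP (@ln R)) ba; field; apply/andP.
Unshelve. all: by end_near. Qed.

Lemma cvg_lndq : lndq fe f p.2 p.1 @[p --> G] --> g x / (f x * Psi_t Psi x (f x)).
Proof.
rewrite invfM mulrA [g x * _]mulrC; apply: cvg_trans (near_eq_cvg lndq_dslope) _.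
apply: cvgM; last by apply: cvgV; [exact: Psi_t_neq0 | exact: dslope_Psi_cvg].
by apply: cvgM; [exact: cvg_dslope_ln (fpos Ox) f_cvg cvg_fe | exact: cvg_within_fst].
Qed.

End ImplicitPerturbation.

Lemma ln_quot_le {R : realType} (a H e L eps : R) : 0 < a -> 0 < H -> e != 0 ->
  a * expR (e * L - `|e| * eps) <= H -> H <= a * expR (e * L + `|e| * eps) ->
  `|(ln H - ln a) / e - L| <= eps.
Proof.
move=> a0 H0 e0 lo hi.
have ln_hi : ln H <= ln a + (e * L + `|e| * eps).
  by move: hi; rewrite -ler_ln ?posrE ?mulr_gt0 ?expR_gt0 // lnM ?posrE ?expR_gt0 // expRK.
have ln_lo : ln a + (e * L - `|e| * eps) <= ln H.
  by move: lo; rewrite -ler_ln ?posrE ?mulr_gt0 ?expR_gt0 // lnM ?posrE ?expR_gt0 // expRK.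
have -> : (ln H - ln a) / e - L = (ln H - ln a - e * L) / e by field.
rewrite normrM normfV ler_pdivrMr ?normr_gt0 // mulrC ler_norml; apply/andP; split; lra.
Qed.

Section LogSupportDerivative.
Variables (R : realType) (n : nat).
Local Notation V := 'rV[R]_n.
Variables (Om : set V) (h : V -> R) (he : R -> V -> R) (L : V -> R) (v u0 : V).
Hypotheses (cpt : compact Om) (ch : {within Om, continuous h})
  (hpos : forall x, Om x -> 0 < h x)
  (he_pos : \forall e \near (0 : R)^', forall y, Om y -> 0 < he e y)
  (lndq_cvg : forall x, Om x ->
     lndq he h p.2 p.1 @[p --> filter_prod (within Om (nbhs x)) (0 : R)^'] --> L x)
  (Ou0 : Om u0) (h0pos : 0 < h u0 * dotv u0 v)
  (uniq : forall xi, Om xi -> xi <> u0 -> h xi * dotv xi v < h u0 * dotv u0 v).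

Local Notation h0 := (h u0 * dotv u0 v).

Let Fmax y : Om y -> h y * dotv y v <= h0.
Proof. by move=> Oy; have [->//|/eqP ?] := eqVneq y u0; exact/ltW/uniq. Qed.

Let he_expR e y : e != 0 -> 0 < he e y -> Om y ->
  he e y * dotv y v = h y * dotv y v * expR (e * lndq he h e y).
Proof.
move=> e0 he0 Oy.
have -> : e * lndq he h e y = ln (he e y) - ln (h y) by rewrite /lndq mulrC divfK.
by rewrite expRB !lnK ?posrE ?hpos //; field; rewrite gt_eqF ?hpos.
Qed.

Let near_he (x : V) : \forall p \near filter_prod (within Om (nbhs x)) (0 : R)^',
  [/\ Om p.1, p.2 != 0 & 0 < he p.2 p.1].
Proof.
near=> p; split; first by near: p; exact: near_within_fst.
  by near: p; exact: (cvg_snd (nbhs_dnbhs_neq 0)).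
near: p; apply: filterS2 (@near_within_fst _ _ Om x _ _) (cvg_snd he_pos) => p Op; exact.
Unshelve. all: by end_near. Qed.

Let upper_at_max eps : 0 < eps ->
  \forall p \near filter_prod (within Om (nbhs u0)) (0 : R)^',
    he p.2 p.1 * dotv p.1 v <= h0 * expR (p.2 * L u0 + `|p.2| * eps).
Proof.
move=> eps0; have close : \forall p \near filter_prod (within Om (nbhs u0)) (0 : R)^',
    `|L u0 - lndq he h p.2 p.1| <= eps.
  by move/cvgrPdist_le/(_ _ eps0): (lndq_cvg Ou0).
near=> p.
have [Op e0 he0] : [/\ Om p.1, p.2 != 0 & 0 < he p.2 p.1] by near: p; exact: near_he.
have cl : `|L u0 - lndq he h p.2 p.1| <= eps by near: p; exact: close.
rewrite he_expR //; have [yv|yv] := leP (dotv p.1 v) 0.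
  rewrite (le_trans _ (ltW (mulr_gt0 h0pos (expR_gt0 _)))) //.
  by apply: mulr_le0_ge0; [rewrite pmulr_rle0 ?hpos | exact: expR_ge0].
apply: ler_pM; [by rewrite mulr_ge0 // ltW ?hpos | exact: expR_ge0 | exact: Fmax |].
rewrite ler_expR.
have : `|p.2 * lndq he h p.2 p.1 - p.2 * L u0| <= `|p.2| * eps.
  by rewrite -mulrBr normrM ler_wpM2l // distrC.
by rewrite ler_norml => /andP[_]; lra.
Unshelve. all: by end_near. Qed.

Let upper_off_max eps x : Om x -> x != u0 ->
  \forall p \near filter_prod (within Om (nbhs x)) (0 : R)^',
    he p.2 p.1 * dotv p.1 v < h0 * expR (p.2 * L u0 + `|p.2| * eps).
Proof.
move=> Ox xu0.
have snd0 : snd @ filter_prod (within Om (nbhs x)) (0 : R)^' --> (0 : R).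
  exact: cvg_trans cvg_snd (cvg_within _).
have cF : {within Om, continuous (fun y => h y * dotv y v)}.
  exact: within_continuousM ch (continuous_subspaceT (@continuous_dotv R n v)).
have lhs : (fun p => h p.1 * dotv p.1 v * expR (p.2 * lndq he h p.2 p.1))
    @ filter_prod (within Om (nbhs x)) (0 : R)^' --> h x * dotv x v * expR (0 * L x).
  apply: cvgM; first exact: cvg_within_fst cF Ox.
  apply: continuous_cvg; first exact: continuous_expR.
  by apply: cvgM; [exact: snd0 | exact: lndq_cvg].
have rhs : (fun p => h0 * expR (p.2 * L u0 + `|p.2| * eps))
    @ filter_prod (within Om (nbhs x)) (0 : R)^' --> h0 * expR (0 * L u0 + `|0 : R| * eps).
  apply: cvgMr; apply: continuous_cvg; first exact: continuous_expR.
  by apply: cvgD; apply: cvgMl; [exact: snd0 | apply: cvg_norm; exact: snd0].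
have lt0 : h x * dotv x v * expR (0 * L x) < h0 * expR (0 * L u0 + `|0 : R| * eps).
  by rewrite normr0 !mul0r addr0 expR0 !mulr1; apply: uniq => //; exact/eqP.
apply: filterS2 (near_he x) (near_lt_cvg lhs rhs lt0) => p [Op e0 he0].
by rewrite he_expR.
Qed.

Lemma supp_fun_chull_upper eps : 0 < eps -> \forall e \near (0 : R)^', forall y, Om y ->
  he e y * dotv y v <= h0 * expR (e * L u0 + `|e| * eps).
Proof.
move=> eps0; apply: compact_near_prod_within cpt _ => x Ox.
have [->|xu0] := eqVneq x u0; first exact: upper_at_max.
by apply: filterS (upper_off_max eps Ox xu0) => p /ltW.
Qed.

Lemma cvg_ln_supp_fun_chull_at :
  (fun e => (ln (supp_fun (chull Om (he e)) v) - ln (supp_fun (chull Om h) v)) / e)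
    @ (0 : R)^' --> L u0.
Proof.
rewrite (supp_fun_chull_max Ou0 Fmax); apply/cvgrPdist_le => eps eps0.
have close : \forall e \near (0 : R)^', `|L u0 - lndq he h e u0| <= eps.
  move/cvgrPdist_le/(_ _ eps0): (lndq_cvg Ou0).
  exact: (near_prod_within_at (P := fun p => `|L u0 - lndq he h p.2 p.1| <= eps)).
have up := supp_fun_chull_upper eps0.
near=> e.
have e0 : e != 0 by near: e; exact: nbhs_dnbhs_neq.
have he0 : 0 < he e u0 by near: e; apply: filterS he_pos => e; exact.
have hb : forall y, Om y -> he e y * dotv y v <= h0 * expR (e * L u0 + `|e| * eps).
  by near: e.
have cl : `|L u0 - lndq he h e u0| <= eps by near: e.
have lo : h0 * expR (e * L u0 - `|e| * eps) <= he e u0 * dotv u0 v.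
  rewrite he_expR // ler_pM2l // ler_expR.
  have : `|e * lndq he h e u0 - e * L u0| <= `|e| * eps.
    by rewrite -mulrBr normrM ler_wpM2l // distrC.
  by rewrite ler_norml => /andP[+ _]; lra.
have Sge := supp_fun_chull_ge Ou0 hb Ou0.
rewrite distrC; apply: ln_quot_le => //.
- exact: lt_le_trans (mulr_gt0 h0pos (expR_gt0 _)) (le_trans lo Sge).
- exact: le_trans lo Sge.
- exact: supp_fun_chull_le Ou0 hb.
Unshelve. all: by end_near. Qed.

End LogSupportDerivative.

Lemma cvg_ln_supp_fun_chull {R : realType} {n : nat} (Om : set 'rV[R]_n)
    (h : 'rV[R]_n -> R) (he : R -> 'rV[R]_n -> R) (L : 'rV[R]_n -> R) v u0 :
  compact Om -> Om `<=` @sphere R n -> ~ (exists u, sphere u /\ Om `<=` hemisphere u) ->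
  {within Om, continuous h} -> (forall x, Om x -> 0 < h x) ->
  (\forall e \near (0 : R)^', forall y, Om y -> 0 < he e y) ->
  (forall x, Om x ->
     lndq he h p.2 p.1 @[p --> filter_prod (within Om (nbhs x)) (0 : R)^'] --> L x) ->
  sphere v -> ~ eta_set (chull Om h) v -> alpha (polar (chull Om h)) v u0 ->
  (fun e => (ln (supp_fun (chull Om (he e)) v) - ln (supp_fun (chull Om h) v)) / e)
    @ (0 : R)^' --> L u0.
Proof.
move=> cpt Os NH ch hpos he_pos lndq_cvg sv Neta Hal.
have [Ou0 h0pos uniq] := polar_chull_normal cpt Os NH ch hpos sv Neta Hal.
exact: cvg_ln_supp_fun_chull_at.
Qed.

Lemma cvg_ln_radial_fun_wulff {R : realType} {n : nat} (Om : set 'rV[R]_n)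
    (h : 'rV[R]_n -> R) (he : R -> 'rV[R]_n -> R) (L : 'rV[R]_n -> R) xi u1 :
  compact Om -> Om `<=` @sphere R n -> ~ (exists u, sphere u /\ Om `<=` hemisphere u) ->
  in_Cpos Om h -> (\forall e \near (0 : R)^', in_Cpos Om (he e)) ->
  (forall x, Om x ->
     lndq he h p.2 p.1 @[p --> filter_prod (within Om (nbhs x)) (0 : R)^'] --> L x) ->
  sphere xi -> ~ eta_set (chull Om (fun x => (h x)^-1)) xi -> alpha (wulff Om h) xi u1 ->
  (fun e => (ln (radial_fun (wulff Om (he e)) xi) - ln (radial_fun (wulff Om h) xi)) / e)
    @ (0 : R)^' --> L u1.
Proof.
move=> cpt Os NH hC he_Cpos lndq_cvg sxi Neta.
have [ch hpos] := hC; move=> Hal; rewrite (wulff_polar_chull hpos) in Hal.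
have [chV hVpos] := in_CposV hC.
have heV_pos : \forall e \near (0 : R)^', forall y, Om y -> 0 < (he e y)^-1.
  by apply: filterS he_Cpos => e /in_CposV[].
have lndqV_cvg x : Om x -> lndq (fun e y => (he e y)^-1) (fun y => (h y)^-1) p.2 p.1
    @[p --> filter_prod (within Om (nbhs x)) (0 : R)^'] --> - L x.
  move=> Ox; apply: cvg_trans (cvgN (lndq_cvg x Ox)); apply: near_eq_cvg.
  apply: filterS2 (@near_within_fst _ _ Om x _ _) (cvg_snd he_Cpos) => p Op [_ he0].
  by rewrite lndqV ?hpos ?he0.
have := cvg_ln_supp_fun_chull cpt Os NH chV hVpos heV_pos lndqV_cvg sxi Neta Hal.
move/cvgN; rewrite opprK; apply: cvg_trans; apply: near_eq_cvg; near=> e.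
have heC : in_Cpos Om (he e) by near: e; exact: he_Cpos.
have [cheV heVpos] := in_CposV heC.
rewrite !radial_fun_wulff //.
rewrite !lnV ?posrE ?(supp_fun_chull_gt0 cpt Os NH chV hVpos sxi)
  ?(supp_fun_chull_gt0 cpt Os NH cheV heVpos sxi) //.
by rewrite opprfctE /=; ring.
Unshelve. all: by end_near. Qed.

Theorem lemma3p3 (R : realType) (n : nat) (Omega : set 'rV[R]_n)
  (Psi : 'rV[R]_n -> R -> R) (f g : 'rV[R]_n -> R) (fe : R -> 'rV[R]_n -> R) :
  (2 <= n)%N ->
  closed Omega -> Omega `<=` @sphere R n ->
  ~ (exists u, @sphere R n u /\ Omega `<=` hemisphere u) ->
  in_C_I Psi \/ in_C_d Psi ->
  in_Cpos Omega f -> in_Cont Omega g ->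
  (exists delta : R, 0 < delta /\
     forall e : R, `|e| < delta ->
       in_Cpos Omega (fe e) /\
       forall xi, Omega xi -> Psi xi (fe e xi) = Psi xi (f xi) + e * g xi) ->
  (* (i) *)
  (forall v u0 : 'rV[R]_n,
     @sphere R n v -> ~ eta_set (chull Omega f) v ->
     alpha (polar (chull Omega f)) v u0 ->
     (fun e => (ln (supp_fun (chull Omega (fe e)) v)
                - ln (supp_fun (chull Omega f) v)) / e) @ 0^'
       --> g u0 / (f u0 * Psi_t Psi u0 (f u0)))
  /\
  (* (ii) *)
  (forall xi u1 : 'rV[R]_n,
     @sphere R n xi -> ~ eta_set (chull Omega (fun x => (f x)^-1)) xi ->
     alpha (wulff Omega f) xi u1 ->
     (fun e => (ln (radial_fun (wulff Omega (fe e)) xi)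
                - ln (radial_fun (wulff Omega f) xi)) / e) @ 0^'
       --> g u1 / (f u1 * Psi_t Psi u1 (f u1))).
Proof.
move=> _ clO Os NH HPsi [cf fpos] cg [d [d0 Hd]].
have cpt : compact Omega := subclosed_compact clO (@sphere_compact R n) Os.
have [s Psi_sign] := in_C_sign HPsi.
have HC : in_C Psi by case: HPsi => -[].
have near_fe : \forall e \near (0 : R)^', in_Cpos Omega (fe e) /\
    forall xi, Omega xi -> Psi xi (fe e xi) = Psi xi (f xi) + e * g xi.
  by apply: nbhs_dnbhs; apply: filterS (nbhs0_lt d0); exact: Hd.
have fe_Cpos : \forall e \near (0 : R)^', in_Cpos Omega (fe e).
  by apply: filterS near_fe => e [].
have fe_eq : \forall e \near (0 : R)^', forall y, Omega y ->
    0 < fe e y /\ Psi y (fe e y) = Psi y (f y) + e * g y.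
  by apply: filterS near_fe => e [[_ fe0] Efe] y Oy; split; [exact: fe0 | exact: Efe].
have lndq_cvg x : Omega x ->
    lndq fe f p.2 p.1 @[p --> filter_prod (within Omega (nbhs x)) (0 : R)^']
    --> g x / (f x * Psi_t Psi x (f x)).
  by move=> Ox; exact (cvg_lndq Os HC Psi_sign cf fpos cg fe_eq Ox).
split=> [v u0|xi u1]; last exact: cvg_ln_radial_fun_wulff cpt Os NH (conj cf fpos) fe_Cpos lndq_cvg.
have fe_pos : \forall e \near (0 : R)^', forall y, Omega y -> 0 < fe e y.
  by apply: filterS fe_Cpos => e [].
exact: cvg_ln_supp_fun_chull cpt Os NH cf fpos fe_pos lndq_cvg.
Qed.
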